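(* Let $A$ be a countable non-empty set of agents and, for each $i\in A$, let $\mathbf{S}_i$ be a compact topological space; put $\mathbf{S}=\prod_{i\in A}\mathbf{S}_i$ with the product topology. Let $\mathcal{G}$ be a compact-strategies, open-preferences class of normal-form games over these agents and strategy spaces, and let $\mathcal{G}'\subseteq\mathcal{G}$ be dense in $\mathcal{G}$. If every game $G\in\mathcal{G}'$ has a Nash equilibrium, then every game $G\in\mathcal{G}$ has a Nash equilibrium.
   Context: A normal-form game over $A$ and $(\mathbf{S}_i)_{i\in A}$ is given by a family of preference relations $\prec_i^G\subseteq\mathbf{S}\times\mathbf{S}$, $i\in A$. A strategy profile $\sigma\in\mathbf{S}$ is a Nash equilibrium of $G$ if there is no agent $i$ and no $s_i\in\mathbf{S}_i$ with $\sigma\prec^G_i\sigma_{i\mapsto s_i}$, where $\sigma_{i\mapsto s_i}$ agrees with $\sigma$ except that its $i$-th component is $s_i$. A class $\mathcal{G}$ of such games (all with the same agents and strategy spaces) is called compact-strategies, open-preferences if every $\mathbf{S}_i$ is compact and $\mathcal{G}$ carries a topology such that the preferences depend continuously (uniformly) on the game: for each $i\in A$ the set $\{(G,\sigma,\sigma')\in\mathcal{G}\times\mathbf{S}\times\mathbf{S}\mid \sigma\prec^G_i\sigma'\}$ is open in $\mathcal{G}\times\mathbf{S}\times\mathbf{S}$ (in particular each $\prec_i^G$ is an open subset of $\mathbf{S}\times\mathbf{S}$). Density of $\mathcal{G}'$ refers to this topology on $\mathcal{G}$. *)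

From HB Require Import structures.
From mathcomp Require Import all_boot all_order.
From mathcomp Require Import all_classical all_reals all_analysis.
Set Implicit Arguments. Unset Strict Implicit. Unset Printing Implicit Defensive.
Local Open Scope classical_set_scope.

(* A normal-form game over agents A and strategy spaces S : a family of
   preference relations, pref i sigma sigma' meaning sigma <_i sigma'. *)
Definition game (A : Type) (S : A -> Type) :=
  A -> (forall i, S i) -> (forall i, S i) -> Prop.

Definition deviate (A : eqType) (S : A -> Type) (sigma : forall j, S j)
  (i : A) (s : S i) : forall j, S j := @dfwith A S sigma i s.

Definition nash_equilibrium (A : eqType) (S : A -> Type) (G : game S)
  (sigma : forall j, S j) : Prop :=
  ~ exists (i : A) (s : S i), G i sigma (deviate sigma s).

(* A class of games: a topological space Gamma of (indices of) games,
   injectively mapped to games, such that preferences are (uniformly)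
   open in the game and both profiles. *)
Definition open_preferences (A : Type) (S : A -> topologicalType)
  (Gamma : topologicalType) (g : Gamma -> game S) : Prop :=
  forall i : A,
    open [set x : Gamma * (prod_topology S * prod_topology S) |
           g x.1 i x.2.1 x.2.2].

Definition compact_strategies (A : Type) (S : A -> topologicalType) : Prop :=
  forall i, compact [set: S i].

From HB Require Import structures.
From mathcomp Require Import all_boot all_order.
From mathcomp Require Import all_classical all_reals all_analysis.
Local Open Scope classical_set_scope.

(* Having a profitable deviation is an open condition on (game, profile),
   because the deviation map sigma |-> sigma_{i |-> s} is continuous and
   preferences are jointly open.  If the game x has no equilibrium, every
   profile has a profitable deviation near x; compactness of the profile
   space (tube lemma) makes one neighbourhood of x work for all profiles at
   once, so no game near x has an equilibrium.  Density then puts a game of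
   G' in that neighbourhood, a contradiction. *)

Section product_topology.
Context {I : eqType} {K : I -> topologicalType}.

Lemma prod_topology_continuous (X : topologicalType) (f : X -> prod_topology K) :
  (forall i, continuous (fun x => f x i)) -> continuous f.
Proof.
move=> cf x; apply/cvg_sup => i.
exact: (@continuous_comp_initial _ _ _ (fun h : prod_topology K => h i) f (cf i)).
Qed.

Lemma dfwith_continuous_profile (i : I) (s : K i) :
  continuous (fun f : prod_topology K => (dfwith f i s : prod_topology K)).
Proof.
apply: prod_topology_continuous => j; have [<-|ij] := eqVneq i j.
  under eq_fun do rewrite dfwithin; exact: cst_continuous.
under eq_fun do rewrite dfwithout //; exact: proj_continuous.
Qed.

Lemma compact_prod_topology : (forall i, compact [set: K i]) ->
  compact [set: prod_topology K].
Proof.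
move=> cK; have := @tychonoff I K (fun _ => setT) cK.
by congr compact; apply/seteqP; split.
Qed.

End product_topology.

Lemma dense_near {T : topologicalType} {D P : set T} {x : T} :
  dense D -> (\forall y \near x, P y) -> exists2 y, D y & P y.
Proof.
move=> dD; rewrite /prop_near1 nbhsE => -[W [oW Wx] WP].
have [y [Wy Dy]] := dD W (ex_intro _ x Wx) oW.
by exists y => //; exact: WP.
Qed.

Section games.
Context {A : eqType} {S : A -> topologicalType}.
Context {Gamma : topologicalType} {g : Gamma -> game S}.
Hypothesis open_pref : open_preferences g.

Definition profitable_deviation (G : game S) (sigma : prod_topology S) :=
  exists (i : A) (s : S i), G i sigma (deviate sigma s).

Lemma profitable_deviation_near (x : Gamma) (tau : prod_topology S) :
  profitable_deviation (g x) tau ->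
  \forall t \near tau & y \near x, profitable_deviation (g y) t.
Proof.
move=> [i [s xtau]].
have := open_pref i; rewrite openE => /(_ (x, (tau, deviate tau s)) xtau).
case=> -[U V] [Ux [[V1 V2] [V1tau V2dev] V12]] UV.
exists (V1 `&` (fun t : prod_topology S => dfwith t i s) @^-1` V2, U).
  split=> //; apply: filterI => //; exact: dfwith_continuous_profile.
move=> [t y] [[V1t V2t] Uy]; exists i, s.
by apply: (UV (y, (t, deviate t s))); split => //; apply: V12.
Qed.

Lemma no_equilibrium_near (x : Gamma) :
  compact [set: prod_topology S] ->
  (forall sigma, ~ nash_equilibrium (g x) sigma) ->
  \forall y \near x, forall sigma, ~ nash_equilibrium (g y) sigma.
Proof.
move=> /compact_near_coveringP cS noNE.
have : \forall y \near x, [set: prod_topology S] `<=` profitable_deviation (g y).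
  apply: cS => tau _; apply: profitable_deviation_near.
  exact: contrapT (noNE tau).
by apply: filterS => y devT sigma; apply; exact: devT.
Qed.

End games.

Theorem theorem8 (A : countType) (S : A -> topologicalType)
  (Gamma : topologicalType) (g : Gamma -> game S) (G' : set Gamma) :
  inhabited A ->
  compact_strategies S ->
  injective g ->
  open_preferences g ->
  dense G' ->
  (forall x, G' x -> exists sigma : prod_topology S, nash_equilibrium (g x) sigma) ->
  forall x : Gamma, exists sigma : prod_topology S, nash_equilibrium (g x) sigma.
Proof.
move=> _ cS _ open_pref dG' NE' x.
apply: contrapT => noNE.
have noNE_near := no_equilibrium_near open_pref x (compact_prod_topology cS)
  (fun sigma NEsigma => noNE (ex_intro _ sigma NEsigma)).
have [y G'y noNEy] := dense_near dG' noNE_near.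
by have [sigma NEsigma] := NE' y G'y; exact: noNEy NEsigma.
Qed.
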